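(* Let $X$ be a topological space, $Y$ a topological space, $(Z,d)$ a metric space and $f:X\times Y\to Z$ a mapping. (a) If $Y$ has a countable base and, for each $x\in X$, $f_x$ is continuous and there is a dense set $D_x\subset Y$ such that $f^y$ is quasicontinuous at $x$ for every $y\in D_x$, then there is a residual set $R\subset X$ such that $f$ is continuous at every point of $R\times Y$. (b) If $Y$ has a countable pseudobase and, for each $x\in X$, $f_x$ is quasicontinuous and there is a dense set $D_x\subset Y$ such that $f^y$ is quasicontinuous at $x$ for every $y\in D_x$, then there is a residual set $R\subset X$ such that $f$ is quasicontinuous with respect to the variable $x$ at every point of $R\times Y$.
   Context: $f_x(y)=f^y(x)=f(x,y)$. A mapping $g$ is quasicontinuous at $a$ if for each neighborhood $U$ of $a$ and neighborhood $W$ of $g(a)$ there is an open $O$ with $\emptyset\ne O\subset U$ and $g(O)\subset W$; quasicontinuous means at every point. $f$ is quasicontinuous with respect to the variable $x$ at $(a,b)$ if for each neighborhood $V$ of $b$ and $\varepsilon>0$ there are a neighborhood $U$ of $a$ and an open $O\subset Y$ with $\emptyset\ne O\subset V$ and $d(f(a,b),f(x,y))\le\varepsilon$ for all $x\in U$, $y\in O$. A pseudobase of $Y$ is a collection of nonempty open sets such that every nonempty open set contains one of them. Residual means containing a countable intersection of dense open sets. *)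

From Stdlib Require Import Reals.
Open Scope R_scope.

Record TopSpace := {
  tcar :> Type;
  topen : (tcar -> Prop) -> Prop;
  topen_full : topen (fun _ => True);
  topen_empty : topen (fun _ => False);
  topen_inter : forall A B, topen A -> topen B -> topen (fun x => A x /\ B x);
  topen_union : forall (F : (tcar -> Prop) -> Prop),
      (forall A, F A -> topen A) -> topen (fun x => exists A, F A /\ A x)
}.

Record MetricSpace := {
  mcar :> Type;
  mdist : mcar -> mcar -> R;
  mdist_nonneg : forall x y, 0 <= mdist x y;
  mdist_eq0 : forall x y, mdist x y = 0 <-> x = y;
  mdist_sym : forall x y, mdist x y = mdist y x;
  mdist_tri : forall x y z, mdist x z <= mdist x y + mdist y z
}.

Definition nbhd {X : TopSpace} (N : X -> Prop) (a : X) : Prop :=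
  exists O, topen X O /\ O a /\ (forall x, O x -> N x).

Definition mnbhd {Z : MetricSpace} (W : Z -> Prop) (z : Z) : Prop :=
  exists eps, eps > 0 /\ (forall w, mdist Z z w < eps -> W w).

Definition pnbhd {X Y : TopSpace} (N : X * Y -> Prop) (p : X * Y) : Prop :=
  exists U V, nbhd U (fst p) /\ nbhd V (snd p) /\
    (forall x y, U x -> V y -> N (x, y)).

Definition continuous_at2 {X Y : TopSpace} {Z : MetricSpace}
  (f : X * Y -> Z) (p : X * Y) : Prop :=
  forall W, mnbhd W (f p) -> exists N, pnbhd N p /\ (forall q, N q -> W (f q)).

Definition quasicontinuous_at {X : TopSpace} {Z : MetricSpace}
  (g : X -> Z) (a : X) : Prop :=
  forall U W, nbhd U a -> mnbhd W (g a) ->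
    exists O, topen X O /\ (exists x, O x) /\
      (forall x, O x -> U x) /\ (forall x, O x -> W (g x)).

Definition quasicontinuous {X : TopSpace} {Z : MetricSpace} (g : X -> Z) : Prop :=
  forall a, quasicontinuous_at g a.

Definition continuous {X : TopSpace} {Z : MetricSpace} (g : X -> Z) : Prop :=
  forall a W, mnbhd W (g a) -> exists U, nbhd U a /\ (forall x, U x -> W (g x)).

Definition qc_wrt_x_at {X Y : TopSpace} {Z : MetricSpace}
  (f : X * Y -> Z) (a : X) (b : Y) : Prop :=
  forall V eps, nbhd V b -> eps > 0 ->
    exists U O, nbhd U a /\ topen Y O /\ (exists y, O y) /\
      (forall y, O y -> V y) /\
      (forall x y, U x -> O y -> mdist Z (f (a, b)) (f (x, y)) <= eps).

Definition dense {X : TopSpace} (D : X -> Prop) : Prop :=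
  forall O, topen X O -> (exists x, O x) -> exists x, O x /\ D x.

Definition residual {X : TopSpace} (R0 : X -> Prop) : Prop :=
  exists G : nat -> (X -> Prop),
    (forall n, topen X (G n) /\ dense (G n)) /\
    (forall x, (forall n, G n x) -> R0 x).

Definition countable_coll {T : Type} (P : (T -> Prop) -> Prop) : Prop :=
  exists e : nat -> option (T -> Prop),
    forall S, P S <-> exists n, e n = Some S.

Definition is_base {Y : TopSpace} (B : (Y -> Prop) -> Prop) : Prop :=
  (forall S, B S -> topen Y S) /\
  (forall O y, topen Y O -> O y -> exists S, B S /\ S y /\ (forall z, S z -> O z)).

Definition is_pseudobase {Y : TopSpace} (B : (Y -> Prop) -> Prop) : Prop :=
  (forall S, B S -> topen Y S /\ exists y, S y) /\
  (forall O, topen Y O -> (exists y, O y) ->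
     exists S, B S /\ (forall z, S z -> O z)).

Definition countable_base (Y : TopSpace) : Prop :=
  exists B : (Y -> Prop) -> Prop, is_base B /\ countable_coll B.

Definition countable_pseudobase (Y : TopSpace) : Prop :=
  exists B : (Y -> Prop) -> Prop, is_pseudobase B /\ countable_coll B.

(* For an open set B of Y and e > 0 call x a jump point if f_x oscillates by
   less than e on B while f oscillates by more than 12e on U x B for every
   neighbourhood U of x.  Jump points form a nowhere dense set: near a jump
   point x0, quasicontinuity of f^y' (y' in D_x0 and B) makes f(., y') nearly
   constant on an open set O1; a big oscillation on O1 x B then forces some
   fibre f_w to move by more than 5e on B, and the quasicontinuity of f_w
   followed by that of f^y'' at w yields an open subset of O1 on which every
   fibre oscillates by at least e on B.  Letting B range over a countable
   (pseudo)base and e over 1/(j+1), off a countable union of nowhere dense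
   sets smallness of f_x on a base set spreads to a product neighbourhood,
   which gives both (a) and (b). *)
From Stdlib Require Import Reals Lra Classical Cantor.
Open Scope R_scope.

Lemma open_nbhd {X : TopSpace} (O : X -> Prop) (x : X) :
  topen X O -> O x -> nbhd O x.
Proof. intros HO Ox; exists O; auto. Qed.

Lemma nbhd_pt {X : TopSpace} (U : X -> Prop) (x : X) : nbhd U x -> U x.
Proof. intros [O [_ [Ox OU]]]; auto. Qed.

Lemma ball_mnbhd {Z : MetricSpace} (z : Z) (e : R) :
  e > 0 -> mnbhd (fun w => mdist Z z w < e) z.
Proof. intros He; exists e; auto. Qed.

Lemma continuous_quasicontinuous {X : TopSpace} {Z : MetricSpace} (g : X -> Z) :
  continuous g -> quasicontinuous g.
Proof.
  intros Hg a U W [O1 [HO1 [O1a O1U]]] HW.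
  destruct (Hg a W HW) as [U' [[O2 [HO2 [O2a O2U']]] U'W]].
  exists (fun x => O1 x /\ O2 x); split; [now apply topen_inter|].
  split; [exists a; auto|].
  split; intros x [h1 h2]; auto.
Qed.

Section NowhereDense.
Context {X : TopSpace}.

Definition avoiding_subopen (A O : X -> Prop) : Prop :=
  exists O', topen X O' /\ (exists x, O' x) /\ (forall x, O' x -> O x) /\
    (forall x, O' x -> ~ A x).

Definition nowhere_dense (A : X -> Prop) : Prop :=
  forall O, topen X O -> (exists x, O x) -> avoiding_subopen A O.

Lemma avoiding_subopen_mono (A O1 O : X -> Prop) :
  (forall x, O1 x -> O x) -> avoiding_subopen A O1 -> avoiding_subopen A O.
Proof.
  intros O1O [O' [HO' [ne [O'O1 O'A]]]].
  exists O'; repeat split; auto.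
Qed.

Lemma avoiding_subopen_of_hit (A O : X -> Prop) :
  topen X O -> (exists x, O x) ->
  (forall x, O x -> A x -> avoiding_subopen A O) -> avoiding_subopen A O.
Proof.
  intros HO ne Hhit.
  destruct (classic (exists x, O x /\ A x)) as [[x [Ox Ax]] | Hno].
  - exact (Hhit x Ox Ax).
  - exists O; repeat split; auto.
    intros x Ox Ax; apply Hno; eauto.
Qed.

Lemma residual_avoiding_nowhere_dense (A : nat -> X -> Prop) :
  (forall n, nowhere_dense (A n)) ->
  exists R0, residual R0 /\ forall x, R0 x -> forall n, ~ A n x.
Proof.
  intros HA.
  set (G := fun n (x : X) =>
              exists O, (topen X O /\ forall z, O z -> ~ A n z) /\ O x).
  exists (fun x => forall n, G n x); split.
  - exists G; split; auto.
    intros n; split.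
    + apply topen_union; intros O [HO _]; exact HO.
    + intros O HO ne.
      destruct (HA n O HO ne) as [O' [HO' [[x O'x] [O'O O'A]]]].
      exists x; split; auto.
      exists O'; auto.
  - intros x Gx n.
    destruct (Gx n) as [O [[_ OA] Ox]]; auto.
Qed.

End NowhereDense.

Section JumpPoints.
Context {X Y : TopSpace} {Z : MetricSpace} (f : X * Y -> Z).

Definition fiber_osc_lt (x : X) (B : Y -> Prop) (e : R) : Prop :=
  forall v v', B v -> B v' -> mdist Z (f (x, v)) (f (x, v')) < e.

Definition spread_exceeds (U : X -> Prop) (B : Y -> Prop) (r : R) : Prop :=
  exists u u' v v', U u /\ U u' /\ B v /\ B v' /\
    r < mdist Z (f (u, v)) (f (u', v')).

Definition jump_point (B : Y -> Prop) (e : R) (x : X) : Prop :=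
  fiber_osc_lt x B e /\ forall U, nbhd U x -> spread_exceeds U B (12 * e).

Lemma fiber_osc_lt_of_ball (x : X) (y : Y) (B : Y -> Prop) (e : R) :
  (forall v, B v -> mdist Z (f (x, y)) (f (x, v)) < e / 2) -> fiber_osc_lt x B e.
Proof.
  intros Hball v v' Bv Bv'.
  pose proof (Hball v Bv); pose proof (Hball v' Bv').
  pose proof (mdist_tri Z (f (x, v)) (f (x, y)) (f (x, v'))).
  rewrite (mdist_sym Z (f (x, v)) (f (x, y))) in *; lra.
Qed.

Hypothesis qc_sections : forall x : X,
  quasicontinuous (fun y : Y => f (x, y)) /\
  exists D : Y -> Prop, dense D /\
    forall y, D y -> quasicontinuous_at (fun x' : X => f (x', y)) x.

Variables (B : Y -> Prop) (e : R).
Hypotheses (HB : topen Y B) (He : e > 0).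

Lemma fibers_spread_on_subopen (O1 : X -> Prop) (w : X) (z y' : Y) :
  topen X O1 -> O1 w -> B z -> B y' ->
  (forall u u', O1 u -> O1 u' -> mdist Z (f (u, y')) (f (u', y')) < 2 * e) ->
  5 * e < mdist Z (f (w, z)) (f (w, y')) ->
  avoiding_subopen (fun t => fiber_osc_lt t B e) O1.
Proof.
  intros HO1 O1w Bz By' Hflat Hfar.
  destruct (qc_sections w) as [qc_w [Dw [Dw_dense qc_Dw]]].
  destruct (qc_w z B _ (open_nbhd B z HB Bz) (ball_mnbhd (f (w, z)) e He))
    as [O'' [HO'' [[t0 O''t0] [O''B O''W]]]].
  destruct (Dw_dense O'' HO'' (ex_intro _ t0 O''t0)) as [y'' [O''y'' Dy'']].
  destruct (qc_Dw y'' Dy'' O1 _ (open_nbhd O1 w HO1 O1w)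
              (ball_mnbhd (f (w, y'')) e He))
    as [O2 [HO2 [ne [O2O1 O2W]]]].
  exists O2; repeat split; auto.
  intros t O2t Hosc.
  pose proof (O''W y'' O''y''); pose proof (O2W t O2t); cbn in *.
  pose proof (Hosc y'' y' (O''B y'' O''y'') By').
  pose proof (Hflat t w (O2O1 t O2t) O1w).
  (* f(w,z) -e- f(w,y'') -e- f(t,y'') -e- f(t,y') -2e- f(w,y') *)
  pose proof (mdist_tri Z (f (w, z)) (f (w, y'')) (f (w, y'))).
  pose proof (mdist_tri Z (f (w, y'')) (f (t, y'')) (f (w, y'))).
  pose proof (mdist_tri Z (f (t, y'')) (f (t, y')) (f (w, y'))).
  lra.
Qed.

Lemma jump_points_nowhere_dense : nowhere_dense (jump_point B e).
Proof.
  intros O HO neO.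
  apply avoiding_subopen_of_hit; auto.
  intros x0 Ox0 [_ wide0].
  destruct (wide0 (fun _ => True)) as [_ [_ [v0 [_ [_ [_ [Bv0 _]]]]]]].
  { exists (fun _ => True); split; [apply topen_full | auto]. }
  destruct (qc_sections x0) as [_ [D0 [D0_dense qc_D0]]].
  destruct (D0_dense B HB (ex_intro _ v0 Bv0)) as [y' [By' Dy']].
  destruct (qc_D0 y' Dy' O _ (open_nbhd O x0 HO Ox0)
              (ball_mnbhd (f (x0, y')) e He))
    as [O1 [HO1 [neO1 [O1O O1W]]]].
  assert (Hflat : forall u u', O1 u -> O1 u' ->
                    mdist Z (f (u, y')) (f (u', y')) < 2 * e).
  { intros u u' O1u O1u'.
    pose proof (O1W u O1u); pose proof (O1W u' O1u'); cbn in *.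
    pose proof (mdist_tri Z (f (u, y')) (f (x0, y')) (f (u', y'))).
    rewrite (mdist_sym Z (f (u, y')) (f (x0, y'))) in *; lra. }
  apply (avoiding_subopen_mono _ O1); auto.
  apply avoiding_subopen_of_hit; auto.
  intros x1 O1x1 [_ wide1].
  destruct (wide1 O1 (open_nbhd O1 x1 HO1 O1x1))
    as [u [u' [v [v' [O1u [O1u' [Bv [Bv' Hbig]]]]]]]].
  assert (Hfar : 5 * e < mdist Z (f (u, v)) (f (u, y')) \/
                 5 * e < mdist Z (f (u', v')) (f (u', y'))).
  { pose proof (Hflat u u' O1u O1u').
    pose proof (mdist_tri Z (f (u, v)) (f (u, y')) (f (u', v'))).
    pose proof (mdist_tri Z (f (u, y')) (f (u', y')) (f (u', v'))).
    rewrite (mdist_sym Z (f (u', y')) (f (u', v'))) in *; lra. }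
  assert (Hspread : avoiding_subopen (fun t => fiber_osc_lt t B e) O1).
  { destruct Hfar.
    - apply (fibers_spread_on_subopen O1 u v y'); auto.
    - apply (fibers_spread_on_subopen O1 u' v' y'); auto. }
  destruct Hspread as [O2 [HO2 [ne2 [O2O1 O2A]]]].
  exists O2; repeat split; auto.
  intros t O2t [Hosc _]; exact (O2A t O2t Hosc).
Qed.

End JumpPoints.

Lemma enum_open_coll {Y : TopSpace} (Bs : (Y -> Prop) -> Prop) :
  countable_coll Bs -> (forall S, Bs S -> topen Y S) ->
  exists S : nat -> Y -> Prop,
    (forall n, topen Y (S n)) /\ forall T, Bs T -> exists n, S n = T.
Proof.
  intros [en Hen] HBs.
  exists (fun n => match en n with Some T => T | None => fun _ => False end).
  split.
  - intros n; destruct (en n) as [T|] eqn:E.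
    + apply HBs, Hen; eauto.
    + apply topen_empty.
  - intros T BsT; destruct (proj1 (Hen T) BsT) as [n En].
    exists n; rewrite En; reflexivity.
Qed.

Lemma exists_small_inv (eps : R) : eps > 0 -> exists j, 13 * / (INR j + 1) < eps.
Proof.
  intros Heps; destruct (INR_archimed eps 13 Heps) as [n Hn].
  exists n; pose proof (pos_INR n).
  apply (Rmult_lt_reg_r (INR n + 1)); [lra|].
  rewrite Rmult_assoc, Rinv_l by lra; nra.
Qed.

(* e = 1/(j+1) runs through a sequence tending to 0, so pairing base sets
   with j gives countably many nowhere dense sets of jump points. *)
Lemma residual_box_control {X Y : TopSpace} {Z : MetricSpace} (f : X * Y -> Z)
  (Bs : (Y -> Prop) -> Prop) :
  countable_coll Bs -> (forall S, Bs S -> topen Y S) ->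
  (forall x : X,
     quasicontinuous (fun y : Y => f (x, y)) /\
     exists D : Y -> Prop, dense D /\
       forall y, D y -> quasicontinuous_at (fun x' : X => f (x', y)) x) ->
  exists R0 : X -> Prop, residual R0 /\ forall x, R0 x ->
    forall eps, eps > 0 -> exists e, e > 0 /\ 13 * e < eps /\
      forall S, Bs S -> fiber_osc_lt f x S e ->
        exists U, nbhd U x /\ ~ spread_exceeds f U S (12 * e).
Proof.
  intros HBc HBo Hf.
  destruct (enum_open_coll Bs HBc HBo) as [S [HS Senum]].
  set (inv := fun j : nat => / (INR j + 1)).
  assert (inv_pos : forall j, inv j > 0).
  { intros j; apply Rlt_gt, Rinv_0_lt_compat; pose proof (pos_INR j); lra. }
  set (A := fun m => jump_point f (S (fst (of_nat m))) (inv (snd (of_nat m)))).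
  destruct (residual_avoiding_nowhere_dense A) as [R0 [HR0 R0A]].
  { intros m; apply jump_points_nowhere_dense; auto. }
  exists R0; split; auto.
  intros x R0x eps Heps.
  destruct (exists_small_inv eps Heps) as [j Hj].
  exists (inv j); repeat split; auto.
  intros T BsT Hosc.
  destruct (Senum T BsT) as [i <-].
  pose proof (R0A x R0x (to_nat (i, j))) as Hgood.
  unfold A in Hgood; rewrite cancel_of_to in Hgood; cbn in Hgood.
  apply NNPP; intros Hno; apply Hgood; split; auto.
  intros U HU; apply NNPP; intros Hsmall; apply Hno; eauto.
Qed.

Lemma spread_bound {X Y : TopSpace} {Z : MetricSpace} (f : X * Y -> Z)
  (U : X -> Prop) (S : Y -> Prop) (r : R) (u u' : X) (v v' : Y) :
  ~ spread_exceeds f U S r -> U u -> U u' -> S v -> S v' ->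
  mdist Z (f (u, v)) (f (u', v')) <= r.
Proof.
  intros Hno Uu Uu' Sv Sv'; apply Rnot_lt_le; intros Hlt.
  apply Hno; exists u, u', v, v'; auto.
Qed.

Lemma continuous_on_residual_of_countable_base
  (X Y : TopSpace) (Z : MetricSpace) (f : X * Y -> Z) :
  countable_base Y ->
  (forall x : X,
     continuous (fun y : Y => f (x, y)) /\
     exists D : Y -> Prop, dense D /\
       forall y, D y -> quasicontinuous_at (fun x' : X => f (x', y)) x) ->
  exists R0 : X -> Prop, residual R0 /\
    forall x y, R0 x -> continuous_at2 f (x, y).
Proof.
  intros [Bs [[HBo HBb] HBc]] Hf.
  destruct (residual_box_control f Bs HBc HBo) as [R0 [HR0 Hctl]].
  { intros x; destruct (Hf x) as [Hc HD]; split; auto.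
    now apply continuous_quasicontinuous. }
  exists R0; split; auto.
  intros x y R0x W [eps [Heps HW]].
  destruct (Hctl x R0x eps Heps) as [e [He [Hsmall Hbox]]].
  destruct (proj1 (Hf x) y _ (ball_mnbhd (f (x, y)) (e / 2) ltac:(lra)))
    as [U0 [[O0 [HO0 [O0y O0U0]]] U0W]].
  destruct (HBb O0 y HO0 O0y) as [S [BsS [Sy SO0]]].
  destruct (Hbox S BsS) as [U [HU Hno]].
  { apply (fiber_osc_lt_of_ball f x y); intros v Sv; exact (U0W v (O0U0 v (SO0 v Sv))). }
  exists (fun q => U (fst q) /\ S (snd q)); split.
  - exists U, S; split; [|split]; cbn; auto.
    apply open_nbhd; auto.
  - intros [u v] [Uu Sv]; apply HW; cbn in *.
    pose proof (spread_bound f U S _ x u y v Hno (nbhd_pt U x HU) Uu Sy Sv); lra.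
Qed.

Lemma qc_wrt_x_on_residual_of_countable_pseudobase
  (X Y : TopSpace) (Z : MetricSpace) (f : X * Y -> Z) :
  countable_pseudobase Y ->
  (forall x : X,
     quasicontinuous (fun y : Y => f (x, y)) /\
     exists D : Y -> Prop, dense D /\
       forall y, D y -> quasicontinuous_at (fun x' : X => f (x', y)) x) ->
  exists R0 : X -> Prop, residual R0 /\
    forall x y, R0 x -> qc_wrt_x_at f x y.
Proof.
  intros [Bs [[HBo HBb] HBc]] Hf.
  destruct (residual_box_control f Bs HBc (fun S BsS => proj1 (HBo S BsS)) Hf)
    as [R0 [HR0 Hctl]].
  exists R0; split; auto.
  intros a b R0a V eps HV Heps.
  destruct (Hctl a R0a eps Heps) as [e [He [Hsmall Hbox]]].
  destruct (proj1 (Hf a) b V _ HV (ball_mnbhd (f (a, b)) (e / 2) ltac:(lra)))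
    as [O0 [HO0 [neO0 [O0V O0W]]]].
  destruct (HBb O0 HO0 neO0) as [S [BsS SO0]].
  destruct (HBo S BsS) as [HS [s0 Ss0]].
  destruct (Hbox S BsS) as [U [HU Hno]].
  { apply (fiber_osc_lt_of_ball f a b); intros v Sv; exact (O0W v (SO0 v Sv)). }
  exists U, S; repeat split; eauto.
  intros x y Ux Sy.
  pose proof (spread_bound f U S _ a x s0 y Hno (nbhd_pt U a HU) Ux Ss0 Sy).
  pose proof (O0W s0 (SO0 s0 Ss0)); cbn in *.
  pose proof (mdist_tri Z (f (a, b)) (f (a, s0)) (f (x, y))); lra.
Qed.

Theorem corollary3p7 (X Y : TopSpace) (Z : MetricSpace) (f : X * Y -> Z) :
  (countable_base Y ->
   (forall x : X,
      continuous (fun y : Y => f (x, y)) /\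
      exists D : Y -> Prop, dense D /\
        forall y, D y -> quasicontinuous_at (fun x' : X => f (x', y)) x) ->
   exists R0 : X -> Prop, residual R0 /\
     forall x y, R0 x -> continuous_at2 f (x, y))
  /\
  (countable_pseudobase Y ->
   (forall x : X,
      quasicontinuous (fun y : Y => f (x, y)) /\
      exists D : Y -> Prop, dense D /\
        forall y, D y -> quasicontinuous_at (fun x' : X => f (x', y)) x) ->
   exists R0 : X -> Prop, residual R0 /\
     forall x y, R0 x -> qc_wrt_x_at f x y).
Proof.
  split.
  - apply continuous_on_residual_of_countable_base.
  - apply qc_wrt_x_on_residual_of_countable_pseudobase.
Qed.
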